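(* Let $(X,d)$ be a compact metric space and let $f_1,f_2:X\to X$ be continuous. Suppose there is $c\in X$ with $f_1(x)=c$ for all $x\in X$, $f_2(c)=c$, and $f_2$ is sensitive. Then the multiple mapping $F=\{f_1,f_2\}$ is (Hausdorff metric) sensitive.
   Context: For the multiple mapping $F=\{f_1,f_2\}$ and $n\ge 1$, $F^n(x)=\{f_{i_1}f_{i_2}\cdots f_{i_n}(x)\mid i_1,\dots,i_n\in\{1,2\}\}$, a nonempty compact subset of $X$. The Hausdorff metric on nonempty compact subsets is $d_H(A,B)=\max\{\sup_{a\in A}\inf_{b\in B}d(a,b),\sup_{b\in B}\inf_{a\in A}d(a,b)\}$. $F$ is (Hausdorff metric) sensitive if there is $\delta>0$ such that for every nonempty open $U\subset X$ there exist $x,y\in U$ and $n\in\mathbb{Z}^+$ with $d_H(F^n(x),F^n(y))>\delta$. A continuous map $f:X\to X$ is sensitive if there is $\delta>0$ such that for every nonempty open $U\subset X$ there exist $x,y\in U$ and $n\in\mathbb{Z}^+$ with $d(f^n(x),f^n(y))>\delta$. Here $\mathbb{Z}^+=\{1,2,3,\dots\}$. *)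

From HB Require Import structures.
From mathcomp Require Import all_boot all_order all_algebra.
From mathcomp Require Import all_classical all_reals.
From Stdlib Require List.
Set Implicit Arguments. Unset Strict Implicit. Unset Printing Implicit Defensive.
Import Order.TTheory GRing.Theory Num.Theory.
Local Open Scope ring_scope.
Local Open Scope classical_set_scope.

Section Defs.
Context {R : realType} {X : Type}.

Definition is_metric (d : X -> X -> R) : Prop :=
  (forall x y, 0 <= d x y) /\
  (forall x y, d x y = 0 <-> x = y) /\
  (forall x y, d x y = d y x) /\
  (forall x y z, d x z <= d x y + d y z).

Definition dopen (d : X -> X -> R) (U : set X) : Prop :=
  forall x, U x -> exists2 e : R, 0 < e & forall y, d x y < e -> U y.

Definition dcompact (d : X -> X -> R) : Prop :=
  forall (I : Type) (U : I -> set X),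
    (forall i, dopen d (U i)) -> (forall x, exists i, U i x) ->
    exists s : seq I, forall x, exists2 i, List.In i s & U i x.

Definition dcontinuous (d : X -> X -> R) (f : X -> X) : Prop :=
  forall x (e : R), 0 < e ->
    exists2 del : R, 0 < del & forall y, d x y < del -> d (f x) (f y) < e.

(* F^n(x) = { f_{i1} (f_{i2} ( ... f_{in}(x))) | i1..in in {1,2} };
   the word w = [:: i1; ...; in] is encoded by booleans (false = f1, true = f2). *)
Definition Fiter (f1 f2 : X -> X) (n : nat) (x : X) : set X :=
  [set y | exists w : seq bool,
      size w = n /\ y = foldr (fun b z => (if b then f2 else f1) z) x w].

Definition dH (d : X -> X -> R) (A B : set X) : R :=
  Num.max (sup [set r | exists2 a, A a & r = inf [set d a b | b in B]])
          (sup [set r | exists2 b, B b & r = inf [set d a b | a in A]]).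

Definition sensitive (d : X -> X -> R) (f : X -> X) : Prop :=
  exists2 del : R, 0 < del &
    forall U : set X, dopen d U -> U !=set0 ->
      exists x y n, [/\ U x, U y, (1 <= n)%N & d (iter n f x) (iter n f y) > del].

Definition F_sensitive (d : X -> X -> R) (f1 f2 : X -> X) : Prop :=
  exists2 del : R, 0 < del &
    forall U : set X, dopen d U -> U !=set0 ->
      exists x y n, [/\ U x, U y, (1 <= n)%N &
                        dH d (Fiter f1 f2 n x) (Fiter f1 f2 n y) > del].

End Defs.

(** For n >= 1 every word containing f1 sends x to c, since f1 is constant c
    and c is fixed by f2; the only other word is f2^n.  Hence
    F^n(x) = {c, f2^n x}, and the Hausdorff distance between {c, a} and
    {c, b} is at least d(a, b) / 2 because c cannot be close to both a and b.
    So F is sensitive with half the sensitivity constant of f2. *)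
From mathcomp Require Import all_boot all_order all_algebra.
From mathcomp Require Import all_classical all_reals.
Import Order.TTheory GRing.Theory Num.Theory.
Local Open Scope ring_scope.
Local Open Scope classical_set_scope.

Section FiterConstant.
Context {X : Type} {f1 f2 : X -> X} {c : X}.
Hypotheses (f1_const : forall x, f1 x = c) (f2c : f2 c = c).

Lemma foldr_const_fixed (x : X) (w : seq bool) :
  foldr (fun b z => (if b then f2 else f1) z) x w =
  if all id w then iter (size w) f2 x else c.
Proof.
elim: w => [//|[] w IHw] /=; last by rewrite f1_const.
by rewrite IHw; case: (all id w).
Qed.

Lemma Fiter_const_fixed (n : nat) (x : X) : (0 < n)%N ->
  Fiter f1 f2 n x = [set c; iter n f2 x].
Proof.
move=> n_gt0; apply/seteqP; split=> [z [w [<- ->]]|z [->|->]].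
- by rewrite foldr_const_fixed; case: (all id w); [right|left].
- exists (nseq n false); rewrite size_nseq foldr_const_fixed.
  by case: n n_gt0.
- exists (nseq n true); rewrite size_nseq foldr_const_fixed.
  by rewrite size_nseq all_nseq orbT.
Qed.

End FiterConstant.

Section HausdorffPairs.
Context {R : realType} {X : Type}.

Lemma dH_ge_l (d : X -> X -> R) (A B : set X) (a b0 : X) (M m : R) :
  (forall u v, 0 <= d u v) -> A a -> B b0 ->
  (forall a', A a' -> d a' b0 <= M) -> (forall b, B b -> m <= d a b) ->
  m <= dH d A B.
Proof.
move=> d_ge0 Aa Bb0 dM md.
have inf_le a' : inf [set d a' b | b in B] <= d a' b0.
  by apply: ge_inf; [exists 0 => _ [b _ <-]|exists b0].
rewrite le_max; apply/orP; left.
apply: (le_trans (y := inf [set d a b | b in B])).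
  by apply: lb_le_inf; [exists (d a b0), b0|move=> _ [b /md ? <-]].
apply: ub_le_sup; last by exists a.
by exists M => _ [a' Aa' ->]; apply: le_trans (inf_le a') (dM a' Aa').
Qed.

Lemma dH_sym (d : X -> X -> R) (A B : set X) :
  (forall x y, d x y = d y x) -> dH d A B = dH d B A.
Proof.
move=> dC; have {2}-> : d = fun x y => d y x.
  by apply/funext => x; apply/funext => y; exact: dC.
by rewrite /dH maxC.
Qed.

Context {d : X -> X -> R} (d_metric : is_metric d).

Lemma dist_le_2max (a b c : X) : d a b <= 2 * Num.max (d a c) (d b c).
Proof.
case: d_metric => _ [_ [dC dtri]].
rewrite mulr2n mulrDl mul1r (le_trans (dtri a c b)) // (dC c b).
by apply: lerD; rewrite ?le_max lexx ?orbT.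
Qed.

Lemma dH_pair_ge (a b c : X) :
  Num.min (d a b) (Num.max (d a c) (d b c)) <= dH d [set c; a] [set c; b].
Proof.
case: d_metric => d_ge0 [d_eq0 [dC _]].
wlog dbc_le : a b / d b c <= d a c => [hwlog|].
  case/orP: (le_total (d b c) (d a c)) => [/hwlog //|/hwlog swapped].
  by rewrite [dH _ _ _]dH_sym // (dC a b) maxC.
rewrite (max_idPl dbc_le).
apply: (dH_ge_l _ _ _ a c (d a c)) => //; [by right|by left| |].
- by move=> _ [->|->]; rewrite ?(proj2 (d_eq0 c c) erefl).
- by move=> _ [->|->]; rewrite ge_min lexx ?orbT.
Qed.

Lemma dH_pair_ge_half (a b c : X) :
  d a b / 2 <= dH d [set c; a] [set c; b].
Proof.
apply: le_trans (dH_pair_ge a b c); rewrite le_min; apply/andP; split.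
  by rewrite ler_pdivrMr // ler_peMr // ?ler1n; case: d_metric.
by rewrite ler_pdivrMr // mulrC dist_le_2max.
Qed.

End HausdorffPairs.

Theorem theorem3p3 (R : realType) (X : Type) (d : X -> X -> R)
  (f1 f2 : X -> X) (c : X) :
  is_metric d -> dcompact d ->
  dcontinuous d f1 -> dcontinuous d f2 ->
  (forall x, f1 x = c) -> f2 c = c -> sensitive d f2 ->
  F_sensitive d f1 f2.
Proof.
move=> d_metric _ _ _ f1_const f2c [del del_gt0 f2_sens].
exists (del / 2); first by rewrite divr_gt0.
move=> U oU U0; have [x [y [n [Ux Uy n_gt0 far]]]] := f2_sens U oU U0.
exists x, y, n; split => //.
rewrite !(Fiter_const_fixed f1_const f2c n _ n_gt0).
apply: lt_le_trans (dH_pair_ge_half d_metric _ _ c).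
by rewrite ltr_pM2r ?invr_gt0.
Qed.
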